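(* Let $\sigma\in[0,c]$ and let $\omega_k=(Z_k,E_k,-\lambda_k)$ be given. If for every choice of parameters $(W_k,\theta_k,\beta_k)\in\mathcal{S}(\sigma,A)$ the iteration below produces $\omega_{k+1}=\omega_k$, then $\omega_k=\omega_{k+1}\in\Omega^*$.
   Context: Let $A\in\mathbb{R}^{m\times d}$, $X\in\mathbb{R}^{m\times n}$, and let $f:\mathbb{R}^{d\times n}\to\mathbb{R}$, $g:\mathbb{R}^{m\times n}\to\mathbb{R}$ be convex. Consider the problem $\min_{Z,E} f(Z)+g(E)$ subject to $X=AZ+E$. Triples are written $\omega=(Z,E,-\lambda)$ with $\lambda\in\mathbb{R}^{m\times n}$ a Lagrange multiplier. $\Omega^*$ is the solution set: the set of $\omega^*=(Z^*,E^*,-\lambda^* )$ with $0\in\partial f(Z^* )+A^\top\lambda^*$, $0\in\partial g(E^* )+\lambda^*$, $AZ^*+E^*=X$. $\circ$ is the Hadamard product; $\beta^{-1}$ is the entrywise reciprocal; $\tfrac{\theta}{2}\circ\|M\|_F^2:=\tfrac12\sum_{ij}\theta_{ij}M_{ij}^2$. Iteration (D-LADMM), with parameters $W_k\in\mathbb{R}^{m\times d}$, $\theta_k\in\mathbb{R}^{d\times n}$, $\beta_k\in\mathbb{R}^{m\times n}$: $Z_{k+1}=\arg\min_Z\{ f(Z)+\tfrac{\theta_k}{2}\circ\|Z-Z_k+\theta_k^{-1}\circ W_k^\top(\lambda_k+\beta_k\circ(AZ_k+E_k-X))\|_F^2\}$, $E_{k+1}=\arg\min_E\{g(E)+\tfrac{\beta_k}{2}\circ\|E-X+AZ_{k+1}+\beta_k^{-1}\circ\lambda_k\|_F^2\}$,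 $\lambda_{k+1}=\lambda_k+\beta_k\circ(AZ_{k+1}+E_{k+1}-X)$. $\mathcal{S}(\sigma,A)$ is the set of $(W,\theta,\beta)$ with $\|W-A\|\le\sigma$ (spectral norm), $\theta,\beta$ entrywise positive, and $Z\mapsto\theta\circ Z-W^\top(\beta\circ(AZ))$ positive definite ($\langle\cdot(Z),Z\rangle>0$ for $Z\neq0$). Standing assumption: there is a constant $c$ such that $\mathcal{S}(\sigma,A)\ne\emptyset$ for all $0\le\sigma\le c$. *)

From HB Require Import structures.
From mathcomp Require Import all_boot all_order all_algebra.
From mathcomp Require Import reals.
Set Implicit Arguments. Unset Strict Implicit. Unset Printing Implicit Defensive.
Import Order.TTheory GRing.Theory Num.Theory.
Local Open Scope ring_scope.

Section Defs.
Variable R : realType.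

Definition frob {p q : nat} (M N : 'M[R]_(p, q)) : R :=
  \sum_(i < p) \sum_(j < q) M i j * N i j.

Definition hada {p q : nat} (M N : 'M[R]_(p, q)) : 'M[R]_(p, q) :=
  \matrix_(i, j) (M i j * N i j).

Definition hinv {p q : nat} (M : 'M[R]_(p, q)) : 'M[R]_(p, q) :=
  \matrix_(i, j) (M i j)^-1.

(* (theta/2) o ||M||_F^2 := 1/2 sum_ij theta_ij M_ij^2 *)
Definition wsq {p q : nat} (th M : 'M[R]_(p, q)) : R :=
  2^-1 * \sum_(i < p) \sum_(j < q) th i j * M i j ^+ 2.

Definition convex_mx {p q : nat} (f : 'M[R]_(p, q) -> R) : Prop :=
  forall (x y : 'M[R]_(p, q)) (t : R), 0 <= t -> t <= 1 ->
    f (t *: x + (1 - t) *: y) <= t * f x + (1 - t) * f y.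

Definition subdiff {p q : nat} (f : 'M[R]_(p, q) -> R) (x G : 'M[R]_(p, q)) : Prop :=
  forall y, f x + frob G (y - x) <= f y.

Definition is_argmin {p q : nat} (phi : 'M[R]_(p, q) -> R) (x : 'M[R]_(p, q)) : Prop :=
  forall y, phi x <= phi y.

Definition spec_norm_le {p q : nat} (M : 'M[R]_(p, q)) (s : R) : Prop :=
  0 <= s /\
  forall v : 'cV[R]_q, frob (M *m v) (M *m v) <= s ^+ 2 * frob v v.

Definition mx_pos {p q : nat} (M : 'M[R]_(p, q)) : Prop :=
  forall i j, 0 < M i j.

Section Alg.
Variables (m d n : nat) (A : 'M[R]_(m, d)) (X : 'M[R]_(m, n)).

Definition S_set (s : R) (W : 'M[R]_(m, d)) (th : 'M[R]_(d, n)) (be : 'M[R]_(m, n)) : Prop :=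
  spec_norm_le (W - A) s /\ mx_pos th /\ mx_pos be /\
  forall Z : 'M[R]_(d, n), Z != 0 ->
    0 < frob (hada th Z - W^T *m hada be (A *m Z)) Z.

Definition Zobj (f : 'M[R]_(d, n) -> R) (W : 'M[R]_(m, d)) (th : 'M[R]_(d, n))
  (be : 'M[R]_(m, n)) (Zk : 'M[R]_(d, n)) (Ek lk : 'M[R]_(m, n)) (Z : 'M[R]_(d, n)) : R :=
  f Z + wsq th (Z - Zk + hada (hinv th) (W^T *m (lk + hada be (A *m Zk + Ek - X)))).

Definition Eobj (g : 'M[R]_(m, n) -> R) (be : 'M[R]_(m, n)) (Z1 : 'M[R]_(d, n))
  (lk : 'M[R]_(m, n)) (E : 'M[R]_(m, n)) : R :=
  g E + wsq be (E - X + A *m Z1 + hada (hinv be) lk).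

Definition dladmm_step (f : 'M[R]_(d, n) -> R) (g : 'M[R]_(m, n) -> R)
  (W : 'M[R]_(m, d)) (th : 'M[R]_(d, n)) (be : 'M[R]_(m, n))
  (Zk : 'M[R]_(d, n)) (Ek lk : 'M[R]_(m, n))
  (Z1 : 'M[R]_(d, n)) (E1 l1 : 'M[R]_(m, n)) : Prop :=
  is_argmin (Zobj f W th be Zk Ek lk) Z1 /\
  is_argmin (Eobj g be Z1 lk) E1 /\
  l1 = lk + hada be (A *m Z1 + E1 - X).

(* (Z, E, -l) belongs to the solution set Omega^* *)
Definition in_Omega_star (f : 'M[R]_(d, n) -> R) (g : 'M[R]_(m, n) -> R)
  (Z : 'M[R]_(d, n)) (E l : 'M[R]_(m, n)) : Prop :=
  subdiff f Z (- (A^T *m l)) /\ subdiff g E (- l) /\ A *m Z + E = X.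

End Alg.
End Defs.

From HB Require Import structures.
From mathcomp Require Import all_boot all_order all_algebra.
From mathcomp Require Import reals.
From mathcomp Require Import lra.
Set Implicit Arguments. Unset Strict Implicit. Unset Printing Implicit Defensive.
Import Order.TTheory GRing.Theory Num.Theory.
Local Open Scope ring_scope.

(* With sigma = 0 the only admissible W is A itself, and the same parameters
   are admissible for every sigma >= 0.  A fixed point of the lambda-update
   has zero residual A Z + E - X; the two subproblems then say that Z_k and
   E_k minimise f (resp. g) plus a positive weighted quadratic whose linear
   part is <G, .> with G = A^T lambda_k (resp. lambda_k).  Expanding it gives
   phi x <= phi y + <G, y - x> + O(|y - x|^2), and convexity of phi turns such
   a bound into the subgradient inequality for -G. *)

Lemma ge0_of_forall_small (R : realFieldType) (a b : R) :
  (forall t, 0 < t -> t <= 1 -> 0 <= a + t * b) -> 0 <= a.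
Proof.
move=> hab; rewrite leNgt; apply/negP => a_lt0.
have nb_a_gt0 : 0 < `|b| - a by have := normr_ge0 b; lra.
pose t := - a / (`|b| - a).
have t_gt0 : 0 < t by rewrite divr_gt0 // oppr_gt0.
have t_le1 : t <= 1 by rewrite ler_pdivrMr // mul1r; have := normr_ge0 b; lra.
have tE : (`|b| - a) * t = - a by rewrite mulrC divfK // gt_eqF.
have := mulr_ge0 (ltW nb_a_gt0) (hab t t_gt0 t_le1).
rewrite mulrDr mulrA tE; have := ler_norm b; nra.
Qed.

Section Frobenius.
Variable R : realType.

Lemma frob_ge0 p q (M : 'M[R]_(p, q)) : 0 <= frob M M.
Proof. by apply: sumr_ge0 => i _; apply: sumr_ge0 => j _; rewrite -expr2 sqr_ge0. Qed.

Lemma frob_le0_eq0 p q (M : 'M[R]_(p, q)) : frob M M <= 0 -> M = 0.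
Proof.
move=> M_le0; have M0 : frob M M = 0 by apply/eqP; rewrite eq_le M_le0 frob_ge0.
have row_ge0 i : 0 <= \sum_(j < q) M i j * M i j.
  by apply: sumr_ge0 => j _; rewrite -expr2 sqr_ge0.
apply/matrixP => i j; rewrite mxE.
have Mi0 := psumr_eq0P (fun i _ => row_ge0 i) M0 (i := i) isT.
have /eqP := psumr_eq0P (fun j _ => sqr_ge0 (M i j)) Mi0 (i := j) isT.
by rewrite mulf_eq0 orbb => /eqP.
Qed.

Lemma frobZr p q (G M : 'M[R]_(p, q)) t : frob G (t *: M) = t * frob G M.
Proof.
rewrite /frob mulr_sumr; apply: eq_bigr => i _; rewrite mulr_sumr.
by apply: eq_bigr => j _; rewrite mxE mulrCA.
Qed.

Lemma frobNl p q (G M : 'M[R]_(p, q)) : frob (- G) M = - frob G M.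
Proof.
rewrite /frob -sumrN; apply: eq_bigr => i _; rewrite -sumrN.
by apply: eq_bigr => j _; rewrite mxE mulNr.
Qed.

Lemma wsqZ p q (th M : 'M[R]_(p, q)) t : wsq th (t *: M) = t ^+ 2 * wsq th M.
Proof.
rewrite /wsq mulrCA; congr (_ * _); rewrite mulr_sumr; apply: eq_bigr => i _.
by rewrite mulr_sumr; apply: eq_bigr => j _; rewrite mxE exprMn mulrCA.
Qed.

(* The cross term of the square is exactly <G, M> because th o th^-1 = 1. *)
Lemma wsqD_hada_hinv p q (th M G : 'M[R]_(p, q)) : mx_pos th ->
  wsq th (M + hada (hinv th) G) = wsq th M + frob G M + wsq th (hada (hinv th) G).
Proof.
move=> th_pos.
have -> : frob G M = 2^-1 * \sum_(i < p) \sum_(j < q) 2 * (G i j * M i j).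
  rewrite mulr_sumr; apply: eq_bigr => i _; rewrite mulr_sumr; apply: eq_bigr => j _.
  by rewrite mulKf ?pnatr_eq0.
rewrite /wsq -!mulrDr; congr (_ * _).
rewrite -!big_split; apply: eq_bigr => i _; rewrite -!big_split.
apply: eq_bigr => j _ /=; rewrite !mxE sqrrD !mulrDr.
have cross : th i j * (M i j * ((th i j)^-1 * G i j)) = G i j * M i j.
  by rewrite mulrCA mulVKf ?gt_eqF // mulrC.
by rewrite cross -mulr2n mulr_natl.
Qed.

Lemma hadamx0 p q (be : 'M[R]_(p, q)) : hada be 0 = 0.
Proof. by apply/matrixP => i j; rewrite !mxE mulr0. Qed.

Lemma hada_pos_eq0 p q (be M : 'M[R]_(p, q)) : mx_pos be -> hada be M = 0 -> M = 0.
Proof.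
move=> be_pos /matrixP beM0; apply/matrixP => i j; have /eqP := beM0 i j.
by rewrite !mxE mulf_eq0 gt_eqF //= => /eqP.
Qed.

Lemma spec_norm_le0 p q (M : 'M[R]_(p, q)) : spec_norm_le M 0 -> M = 0.
Proof.
move=> [_ hM]; apply/matrixP => i j.
have := hM (delta_mx j 0); rewrite expr0n /= mul0r -colE => /frob_le0_eq0.
by move=> /matrixP /(_ i 0); rewrite !mxE.
Qed.

Lemma spec_norm_le_trans p q (M : 'M[R]_(p, q)) s s' :
  s <= s' -> spec_norm_le M s -> spec_norm_le M s'.
Proof.
move=> ss' [s_ge0 hM]; split=> [|v]; first exact: le_trans ss'.
apply: le_trans (hM v) _; rewrite ler_wpM2r ?frob_ge0 //.
by rewrite ler_pXn2r ?nnegrE ?(le_trans s_ge0).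
Qed.

End Frobenius.

Section Proximal.
Variables (R : realType) (p q : nat).
Implicit Types (phi : 'M[R]_(p, q) -> R) (th x G : 'M[R]_(p, q)).

Lemma prox_argmin_quadratic_bound phi th x G : mx_pos th ->
  is_argmin (fun y => phi y + wsq th (y - x + hada (hinv th) G)) x ->
  forall y, phi x <= phi y + frob G (y - x) + wsq th (y - x).
Proof.
move=> th_pos x_min y; have := x_min y.
by rewrite subrr add0r wsqD_hada_hinv //; lra.
Qed.

Lemma subdiff_of_quadratic_bound phi th x G : convex_mx phi -> mx_pos th ->
  (forall y, phi x <= phi y + frob G (y - x) + wsq th (y - x)) ->
  subdiff phi x (- G).
Proof.
move=> phi_cvx th_pos bound y; rewrite frobNl.
set D := y - x; set a := phi y - phi x + frob G D; set b := wsq th D.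
suff : 0 <= a by rewrite /a; lra.
apply: (@ge0_of_forall_small _ a b) => t t_gt0 t_le1.
have shift : x + t *: D - x = t *: D by rewrite addrC addKr.
have := bound (x + t *: D); rewrite shift frobZr wsqZ.
have := phi_cvx y x t (ltW t_gt0) t_le1.
have -> : t *: y + (1 - t) *: x = x + t *: D.
  by rewrite /D scalerBr scalerBl scale1r addrCA addrC.
rewrite -/b => cvx_step quad_step.
have : 0 <= t * (a + t * b) by rewrite /a; nra.
by rewrite pmulr_rge0.
Qed.

Lemma prox_argmin_subdiff phi th x G : convex_mx phi -> mx_pos th ->
  is_argmin (fun y => phi y + wsq th (y - x + hada (hinv th) G)) x ->
  subdiff phi x (- G).
Proof.
move=> phi_cvx th_pos /prox_argmin_quadratic_bound-/(_ th_pos).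
exact: subdiff_of_quadratic_bound.
Qed.

End Proximal.

Section DLADMM.
Variables (R : realType) (m d n : nat) (A : 'M[R]_(m, d)) (X : 'M[R]_(m, n)).
Variables (f : 'M[R]_(d, n) -> R) (g : 'M[R]_(m, n) -> R).
Implicit Types (W : 'M[R]_(m, d)) (th : 'M[R]_(d, n)) (be : 'M[R]_(m, n)).

Lemma S_set_le s s' W th be : s <= s' -> S_set A s W th be -> S_set A s' W th be.
Proof. by move=> ss' [WA ths]; split=> //; exact: spec_norm_le_trans ss' WA. Qed.

Lemma S_set0_eq W th be : S_set A 0 W th be -> W = A.
Proof. by move=> [/spec_norm_le0/eqP WA _]; apply/eqP; rewrite -subr_eq0. Qed.

Lemma dladmm_fixed_residual W th be Zk Ek lk : mx_pos be ->
  dladmm_step A X f g W th be Zk Ek lk Zk Ek lk -> A *m Zk + Ek = X.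
Proof.
move=> be_pos [_ [_ l_fix]].
have /hada_pos_eq0-/(_ be_pos) residual0 : hada be (A *m Zk + Ek - X) = 0.
  by apply: (addrI lk); rewrite addr0 -l_fix.
by apply/eqP; rewrite -subr_eq0 residual0.
Qed.

Lemma dladmm_fixed_optimal th be Zk Ek lk :
  convex_mx f -> convex_mx g -> mx_pos th -> mx_pos be ->
  dladmm_step A X f g A th be Zk Ek lk Zk Ek lk -> in_Omega_star A X f g Zk Ek lk.
Proof.
move=> f_cvx g_cvx th_pos be_pos step.
have feasible := dladmm_fixed_residual be_pos step.
have [Z_min [E_min _]] := step.
split; [|split] => //.
- apply: prox_argmin_subdiff => // Z; have := Z_min Z.
  by rewrite /Zobj feasible !subrr hadamx0 addr0.
- apply: prox_argmin_subdiff => // E; have := E_min E.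
  have shift E' : E' - X + A *m Zk = E' - Ek by rewrite -feasible opprD addrA addrAC subrK.
  by rewrite /Eobj !shift.
Qed.

End DLADMM.

Theorem lemma3 (R : realType) (m d n : nat) (A : 'M[R]_(m, d)) (X : 'M[R]_(m, n))
  (f : 'M[R]_(d, n) -> R) (g : 'M[R]_(m, n) -> R)
  (hf : convex_mx f) (hg : convex_mx g)
  (c : R)
  (hS : forall s : R, 0 <= s -> s <= c ->
          exists (W : 'M[R]_(m, d)) (th : 'M[R]_(d, n)) (be : 'M[R]_(m, n)), S_set A s W th be)
  (s : R) (hs0 : 0 <= s) (hsc : s <= c)
  (Zk : 'M[R]_(d, n)) (Ek lk : 'M[R]_(m, n))
  (hfix : forall (W : 'M[R]_(m, d)) (th : 'M[R]_(d, n)) (be : 'M[R]_(m, n)), S_set A s W th be ->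
            dladmm_step A X f g W th be Zk Ek lk Zk Ek lk) :
  in_Omega_star A X f g Zk Ek lk.
Proof.
have [W [th [be S0]]] := hS 0 (lexx 0) (le_trans hs0 hsc).
have WA := S_set0_eq S0; subst W.
have [_ [th_pos [be_pos _]]] := S0.
exact: dladmm_fixed_optimal hf hg th_pos be_pos (hfix _ _ _ (S_set_le hs0 S0)).
Qed.
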